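(* Let $G=(R,B,2,(\succsim_a)_{a\in R\cup B})$ be a roommate diversity game with room size $2$. Let $G_m$ be the complete undirected graph on vertex set $R\cup B$ in which the edge $\{a,b\}$ has weight $w(a,b)\in\{0,1,2\}$ equal to the number of agents among $a,b$ that are happy in the room $\{a,b\}$. Then every maximum weight perfect matching $M_*$ of $G_m$, viewed as an outcome of $G$ (each matched pair forms a room), is popular.
   Context: A roommate diversity game is a quadruple $G=(R,B,s,(\succsim_a)_{a\in R\cup B})$ where $R$ (red agents) and $B$ (blue agents) are disjoint finite sets, $s\in\mathbb{N}^+$ is the room size, $|R\cup B|=ks$ for some $k\in\mathbb{N}$, and each $\succsim_a$ is a complete transitive weak order on $D=\{j/s : j\in\{0,\dots,s\}\}$. An outcome is a partition $\pi$ of $N=R\cup B$ into $k$ rooms of size $s$; $\pi(a)$ is the room containing $a$, and $\theta(C)=|C\cap R|/|C|$ is the fraction of red agents of a room $C$. Agent $a$ prefers $\pi$ to $\pi'$ if $\theta(\pi(a))\succsim_a\theta(\pi'(a))$ and not $\theta(\pi'(a))\succsim_a\theta(\pi(a))$. Let $N(\pi,\pi')$ be the set of agents preferring $\pi$ to $\pi'$ and $\phi(\pi,\pi')=|N(\pi,\pi')|-|N(\pi',\pi)|$. An outcome $\pi$ is popular if $\phi(\pi,\pi')\ge 0$ for every outcome $\pi'$. For room size $2$, a red agent can only be in rooms of fraction $1/2$ or $1$, and a blue agent only in rooms of fraction $0$ or $1/2$; preferences over the impossible fraction are disregarded. An agent is happy in a room if the fraction of that room is weakly preferred by the agent to every fraction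 possible for its color (i.e. $\{1/2,1\}$ for red, $\{0,1/2\}$ for blue); otherwise it is sad. *)

From mathcomp Require Import all_boot all_order all_algebra.
Set Implicit Arguments. Unset Strict Implicit. Unset Printing Implicit Defensive.

(* Agents form a finite type [T]; [red a] is true for red agents (R),
   false for blue agents (B).  Room size is fixed to s = 2, so the
   fraction j/2 of a room is encoded by j : 'I_3 (j = number of red agents).
   [pref a : rel 'I_3] is agent a's weak order on D = {0, 1/2, 1}:
   [pref a x y] means x/2 is weakly preferred to y/2. *)

Import GRing.Theory Num.Theory.
Section RDG.
Variable T : finType.
Variable red : pred T.
Variable pref : T -> rel 'I_3.

Definition weak_order (r : rel 'I_3) : Prop :=
  (forall x y, r x y || r y x) /\ (forall x y z, r x y -> r y z -> r x z).

Definition outcome (P : {set {set T}}) : Prop :=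
  partition P [set: T] /\ (forall C, C \in P -> #|C| = 2).

Definition theta (C : {set T}) : 'I_3 := inord #|[set x in C | red x]|.

Definition prefers (a : T) (P P' : {set {set T}}) : bool :=
  pref a (theta (pblock P a)) (theta (pblock P' a)) &&
  ~~ pref a (theta (pblock P' a)) (theta (pblock P a)).

Definition N_pref (P P' : {set {set T}}) : {set T} :=
  [set a | prefers a P P'].

Definition phi (P P' : {set {set T}}) : int :=
  (#|N_pref P P'|)%:Z - (#|N_pref P' P|)%:Z.

Definition popular (P : {set {set T}}) : Prop :=
  forall P', outcome P' -> (0 <= phi P P')%R.

Definition possible (a : T) (j : 'I_3) : bool :=
  if red a then 1 <= j else j <= 1.

Definition happy (a : T) (C : {set T}) : bool :=
  [forall j : 'I_3, possible a j ==> pref a (theta C) j].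

Definition weight (C : {set T}) : nat := #|[set x in C | happy x C]|.

(* weight of a perfect matching of G_m (= a partition into 2-sets) *)
Definition mweight (M : {set {set T}}) : nat := \sum_(C in M) weight C.

Definition max_weight_perfect_matching (M : {set {set T}}) : Prop :=
  outcome M /\ (forall M', outcome M' -> mweight M' <= mweight M).

End RDG.

(* An agent's room fraction in any outcome is one of only two values possible
   for its colour, and preferences are complete, so the agent strictly prefers
   outcome P to P' exactly when it is happy in P and sad in P'.  Hence
   phi(P, P') is the number of happy agents in P minus that in P'.  The weight
   of a perfect matching also counts its happy agents, so a maximum weight
   perfect matching has at least as many happy agents as any outcome. *)

From mathcomp Require Import all_boot all_order all_algebra.
From mathcomp Require Import zify.

Set Implicit Arguments.
Unset Strict Implicit.
Unset Printing Implicit Defensive.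

Import GRing.Theory Num.Theory.

Lemma cardsDD_int (T : finType) (A B : {set T}) :
  (#|A :\: B|%:Z - #|B :\: A|%:Z = #|A|%:Z - #|B|%:Z)%R.
Proof.
have := cardsID B A; have := cardsID A B; rewrite setIC; lia.
Qed.

Section HappyAgents.
Variable T : finType.
Variable red : pred T.
Variable pref : T -> rel 'I_3.

Definition happy_agents (P : {set {set T}}) : {set T} :=
  [set a | happy red pref a (pblock P a)].

Lemma outcome_pblock P (a : T) : outcome P ->
  [/\ a \in pblock P a, pblock P a \in P & #|pblock P a| = 2].
Proof.
move=> [partP card2].
have aP : a \in cover P by rewrite (cover_partition partP) inE.
by split; [rewrite mem_pblock | exact: pblock_mem | exact/card2/pblock_mem].
Qed.

Lemma possible_theta_pblock P (a : T) : outcome P ->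
  possible red a (theta red (pblock P a)).
Proof.
move=> oP; have [aC _] := outcome_pblock a oP; set C := pblock P a => cardC.
have le_red_C : #|[set x in C | red x]| <= 2.
  by rewrite -cardC subset_leq_card //; apply/subsetP => x; rewrite inE => /andP[].
rewrite /possible /theta inordK ?ltnS //.
case: ifPn => [ra | nra].
  by apply/card_gt0P; exists a; rewrite inE aC.
have : [set x in C | red x] \subset C :\ a.
  by apply/subsetP => x; rewrite !inE => /andP[-> rx]; rewrite andbT; apply: contraNneq nra => <-.
move/subset_leq_card; have := cardsD1 a C; rewrite aC cardC; lia.
Qed.

Lemma possible_dichotomy (a : T) (x y j : 'I_3) :
  possible red a x -> possible red a y -> possible red a j -> x != y ->
  j = x \/ j = y.
Proof.
rewrite /possible -val_eqE /= => px py pj /eqP xy.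
have := ltn_ord x; have := ltn_ord y; have := ltn_ord j => jlt ylt xlt.
have : val j = x \/ val j = y by case: (red a) px py pj => /= px py pj; lia.
by case=> /val_inj ->; [left | right].
Qed.

Lemma card_happy_agents P : outcome P -> #|happy_agents P| = mweight red pref P.
Proof.
case=> partP _; have trivP : trivIset P by case/and3P: partP.
have weightE C : C \in P ->
    weight red pref C = \sum_(x in C | happy red pref x (pblock P x)) 1.
  move=> PC; rewrite sum1dep_card; apply: eq_card => x; rewrite !inE.
  by case xC: (x \in C); rewrite //= (def_pblock trivP PC xC).
rewrite /mweight (eq_bigr _ weightE) -(big_trivIset_cond _ trivP).
by rewrite (cover_partition partP) sum1dep_card; apply: eq_card => x; rewrite !inE.
Qed.

Hypothesis pref_weak_order : forall a, weak_order (pref a).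

Lemma strict_pref_happyE (a : T) (x y : 'I_3) :
  possible red a x -> possible red a y ->
  pref a x y && ~~ pref a y x =
  [forall j, possible red a j ==> pref a x j] &&
  ~~ [forall j, possible red a j ==> pref a y j].
Proof.
move=> px py; have [total _] := pref_weak_order a.
have refl z : pref a z z by have := total z z; rewrite orbb.
have [-> | xy] := eqVneq x y; first by rewrite refl /= andbN.
have bestE u v : u != v -> possible red a u -> possible red a v ->
  [forall j, possible red a j ==> pref a u j] = pref a u v.
  move=> uv pu pv; apply/forallP/idP => [/(_ v)/implyP -> // | uv_pref j].
  apply/implyP => pj.
  by case: (possible_dichotomy pu pv pj uv) => ->.
by rewrite (bestE x y) // (bestE y x) // eq_sym.
Qed.

Lemma prefersE P P' (a : T) : outcome P -> outcome P' ->
  prefers red pref a P P' = (a \in happy_agents P :\: happy_agents P').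
Proof.
move=> oP oP'; rewrite !inE andbC /prefers /happy.
by rewrite strict_pref_happyE ?possible_theta_pblock.
Qed.

Lemma N_pref_happy_agents P P' : outcome P -> outcome P' ->
  N_pref red pref P P' = happy_agents P :\: happy_agents P'.
Proof. by move=> oP oP'; apply/setP => a; rewrite inE prefersE. Qed.

Lemma phi_happy_agents P P' : outcome P -> outcome P' ->
  phi red pref P P' = (#|happy_agents P|%:Z - #|happy_agents P'|%:Z)%R.
Proof.
by move=> oP oP'; rewrite /phi !N_pref_happy_agents // cardsDD_int.
Qed.

End HappyAgents.

Theorem mainTheorem1 (T : finType) (red : pred T) (pref : T -> rel 'I_3)
  (Hpref : forall a, weak_order (pref a))
  (M : {set {set T}}) :
  max_weight_perfect_matching red pref M -> popular red pref M.
Proof.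
move=> [oM maxM] P' oP'.
rewrite phi_happy_agents // subr_ge0 lez_nat.
by rewrite !card_happy_agents //; apply: maxM.
Qed.
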